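(* Let $c\geq1$ be a natural number and let $X$ be a finite set of natural numbers, all greater than $2$, which is $(\omega\cdot c)$-large. Then every colouring $C\colon X\to\{0,\dots,c-1\}$ admits an $\omega$-large subset $H\subseteq X$ on which $C$ is constant.
   Context: Ordinals are notations below $\varepsilon_0$ in Cantor normal form; $\omega\cdot c$ denotes $\omega+\dots+\omega$ ($c$ times). Fundamental sequences: $0[x]=0$; $(\beta+1)[x]=\beta$; $(\beta+\omega)[x]=\beta+x$, meaning $\beta$ followed by $x$ copies of $1=\omega^0$. In general, for $\alpha=\omega^{\alpha_0}+\dots+\omega^{\alpha_n}$ with last exponent $\alpha_n=\delta+1$, $\alpha[x]=\omega^{\alpha_0}+\dots+\omega^{\alpha_{n-1}}+\omega^\delta\cdot x$. A finite set $X=\{x_0<\dots<x_{|X|-1}\}$ is $\alpha$-large if $\alpha[x_0][x_1]\cdots[x_{|X|-1}]=0$. *)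

From mathcomp Require Import all_boot.
Set Implicit Arguments. Unset Strict Implicit. Unset Printing Implicit Defensive.

(* Ordinal notations below epsilon_0 in Cantor normal form:
   [ON l] with l = [:: a_0; ...; a_n] denotes omega^a_0 + ... + omega^a_n
   (exponents nonincreasing for normal forms).  [ON [::]] is 0. *)
Inductive ON : Type := CNF : seq ON -> ON.

Definition on_zero : ON := CNF [::].
Definition is_zero (a : ON) : bool := if a is CNF [::] then true else false.
Definition on_one : ON := CNF [:: on_zero].
Definition omega : ON := CNF [:: on_one].
Definition omega_mul (c : nat) : ON := CNF (nseq c on_one).

(* Fundamental sequences a[x]:
   0[x] = 0; (b + omega^0)[x] = b;
   (b + omega^(d+1))[x] = b + omega^d * x  (x copies of omega^d);
   (b + omega^l)[x] = b + omega^(l[x]) for limit l. *)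
Fixpoint fs (a : ON) (x : nat) {struct a} : ON :=
  match a with
  | CNF l =>
    let step (b : ON) : seq ON :=
      match b with
      | CNF [::] => [::]
      | CNF (e :: le) =>
          if is_zero (last e le) then nseq x (CNF (belast e le))
          else [:: fs b x]
      end in
    let fix go (l : seq ON) : seq ON :=
      match l with
      | [::] => [::]
      | [:: b] => step b
      | b :: l' => b :: go l'
      end in
    CNF (go l)
  end.

Definition large (a : ON) (X : seq nat) : bool :=
  is_zero (foldl fs a (sort leq X)).

From mathcomp Require Import all_boot zify.

(* X is (omega * c)-large iff its least element x
   is followed by at least x elements and what comes after those is
   (omega * (c-1))-large.  If the colour class of x is not omega-large, it has
   at most x elements; deleting it removes fewer than x elements after x, so
   the remaining sequence lies pointwise below the (omega * (c-1))-large tail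
   and is therefore (omega * (c-1))-large itself, while using one colour less. *)

Set Implicit Arguments.
Unset Strict Implicit.
Unset Printing Implicit Defensive.

Definition terms (a : ON) : seq ON := let: CNF l := a in l.

Lemma fs_cons2 b b' l x :
  fs (CNF [:: b, b' & l]) x = CNF (b :: terms (fs (CNF (b' :: l)) x)).
Proof. by []. Qed.

Lemma fs_rcons l b x :
  fs (CNF (rcons l b)) x = CNF (l ++ terms (fs (CNF [:: b]) x)).
Proof.
elim: l => [|a l IH] //.
have [b' [l' El]] : exists b' l', rcons l b = b' :: l'.
  by case: (l) => [|a' l']; [exists b, [::] | exists a', (rcons l' b)].
by rewrite rcons_cons El fs_cons2 -El IH.
Qed.

Definition omega_mul_add (k r : nat) : ON :=
  CNF (nseq k on_one ++ nseq r on_zero).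

Lemma omega_mul_add0 k : omega_mul_add k 0 = omega_mul k.
Proof. by rewrite /omega_mul_add cats0. Qed.

Lemma fs_omega_mul_addS k r x : fs (omega_mul_add k r.+1) x = omega_mul_add k r.
Proof.
by rewrite /omega_mul_add -addn1 nseqD cats1 -rcons_cat fs_rcons cats0.
Qed.

Lemma fs_omega_mulS k x : fs (omega_mul k.+1) x = omega_mul_add k x.
Proof. by rewrite /omega_mul -addn1 nseqD cats1 fs_rcons. Qed.

Lemma foldl_fs_zero s : foldl fs on_zero s = on_zero.
Proof. by elim: s. Qed.

Lemma is_zero_foldl_omega_mul_add k r s :
  is_zero (foldl fs (omega_mul_add k r) s) =
  (r <= size s) && is_zero (foldl fs (omega_mul k) (drop r s)).
Proof.
elim: s r => [|x s IH] [|r] //; rewrite ?omega_mul_add0 //.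
- by case: k.
- by have := IH r; rewrite -(fs_omega_mul_addS k r x).
Qed.

Fixpoint omega_mul_large (k : nat) (s : seq nat) : bool :=
  if k is k'.+1 then
    if s is x :: t then (x <= size t) && omega_mul_large k' (drop x t)
    else false
  else true.

Lemma is_zero_foldl_omega_mul k s :
  is_zero (foldl fs (omega_mul k) s) = omega_mul_large k s.
Proof.
elim: k s => [|k IH] [|x s] //; first by rewrite foldl_fs_zero.
change (is_zero (foldl fs (fs (omega_mul k.+1) x) s)
        = (x <= size s) && omega_mul_large k (drop x s)).
by rewrite fs_omega_mulS is_zero_foldl_omega_mul_add IH.
Qed.

Lemma large_omega_mul k X :
  large (omega_mul k) X = omega_mul_large k (sort leq X).
Proof. exact: is_zero_foldl_omega_mul. Qed.

Definition below (v u : seq nat) : Prop :=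
  size u <= size v /\ forall j, j < size u -> nth 0 v j <= nth 0 u j.

Lemma omega_mul_large_below k u v :
  sorted leq v -> below v u -> omega_mul_large k u -> omega_mul_large k v.
Proof.
elim: k u v => [|k IH] // [|y tu] // v sv [size_uv le_uv] /andP[y_le large_tu].
case: v sv size_uv le_uv => [|z tv] //= sv size_uv le_uv.
have z_le_y : z <= y by exact: (le_uv 0).
have stv : sorted leq tv := path_sorted sv.
apply/andP; split; first by lia.
apply: IH large_tu; first exact: drop_sorted.
split=> [|j]; rewrite !size_drop; first by lia.
move=> lt_j; rewrite !nth_drop.
apply: (@leq_trans (nth 0 tv (y + j))); last by apply: (le_uv (y + j).+1); lia.
by apply: (sorted_leq_nth leq_trans leqnn) => //; rewrite ?inE; lia.
Qed.

Lemma nth_filter_le_shift (a : pred nat) t j :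
  sorted leq t -> j < size (filter (predC a) t) ->
  nth 0 (filter (predC a) t) j <= nth 0 t (j + count a t).
Proof.
elim: t j => [|y t IH] j //= syt.
have st : sorted leq t := path_sorted syt.
case: (a y) => /=; first by rewrite addnS; apply: IH.
case: j => [|j] lt_j /=; last by apply: IH.
have := count_size a t.
rewrite add0n; case: (count _ t) => [|d] // lt_d.
by apply: (sorted_leq_nth leq_trans leqnn 0 (syt : sorted leq (y :: t)) 0 d.+1).
Qed.

Lemma below_filter_drop (a : pred nat) n t :
  sorted leq t -> count a t <= n -> below (filter (predC a) t) (drop n t).
Proof.
move=> st le_n; have := count_predC a t => sz_t.
split=> [|j]; rewrite size_drop ?size_filter; first by lia.
move=> lt_j.
rewrite nth_drop; apply: leq_trans (@nth_filter_le_shift a t j st _) _.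
  by rewrite size_filter; lia.
by apply: (sorted_leq_nth leq_trans leqnn) => //; rewrite ?inE; lia.
Qed.

Lemma omega_mul_large_filter (a : pred nat) k n t :
  sorted leq t -> count a t <= n -> omega_mul_large k (drop n t) ->
  omega_mul_large k (filter (predC a) t).
Proof.
move=> st le_n; apply: omega_mul_large_below; last exact: below_filter_drop.
exact: (sorted_filter leq_trans _ st).
Qed.

Lemma omega_mul_large_size_gt0 k s : 0 < k -> omega_mul_large k s -> 0 < size s.
Proof. by case: k => // k _; case: s. Qed.

Lemma omega_mul_large_monochromatic (T : finType) (C : nat -> T) k
    (D : {set T}) s :
  sorted leq s -> 0 < size s -> {in s, forall y, C y \in D} -> #|D| <= k ->
  omega_mul_large k s -> exists i, omega_mul_large 1 [seq y <- s | C y == i].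
Proof.
elim: k D s => [|k IH] D [|x t] // sxt _ sD card_D.
  move: card_D (sD x (mem_head _ _)).
  by rewrite leqn0 => /eqP/cards0_eq ->; rewrite in_set0.
move=> /andP[x_le large_drop].
have [|small] := boolP (omega_mul_large 1 [seq y <- x :: t | C y == C x]).
  by exists (C x).
have st : sorted leq t := path_sorted sxt.
have few_x : count (fun y => C y == C x) t < x.
  by move: small; rewrite /= eqxx /= size_filter andbT -ltnNge.
set t' := [seq y <- t | C y != C x].
have large_t' : omega_mul_large k t'.
  exact: omega_mul_large_filter st (ltnW few_x) large_drop.
have t'_nonnil : 0 < size t'.
  have : count (fun y => C y != C x) t + count (fun y => C y == C x) t = size t.
    by rewrite addnC; exact: count_predC.
  rewrite /t' size_filter; lia.
have t'_colours : {in t', forall y, C y \in D :\ C x}.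
  move=> y; rewrite mem_filter in_setD1 => /andP[-> yt].
  by rewrite sD // inE yt orbT.
have card_D' : #|D :\ C x| <= k.
  by move: card_D; rewrite (cardsD1 (C x)) sD ?mem_head.
have st' : sorted leq t' := sorted_filter leq_trans _ st.
have [i large_i] := IH _ t' st' t'_nonnil t'_colours card_D' large_t'.
exists i; move: large_i; rewrite /t' -filter_predI /= eq_sym.
have [-> | ne_i] := eqVneq i (C x).
  rewrite (@eq_filter _ _ pred0) ?filter_pred0 // => y /=.
  by case: eqP => // ->; rewrite eqxx.
rewrite (@eq_filter _ _ (fun y => C y == i)) // => y /=.
by case: eqP => // ->.
Qed.

Theorem lemma4p1 (c : nat) (X : seq nat) :
  1 <= c -> uniq X -> (forall x, x \in X -> 2 < x) ->
  large (omega_mul c) X ->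
  forall C : nat -> 'I_c,
  exists H : seq nat,
    [/\ uniq H, {subset H <= X}, large omega H &
        exists i : 'I_c, forall x, x \in H -> C x = i].
Proof.
move=> c_pos uX _ lX C.
have large_s : omega_mul_large c (sort leq X) by rewrite -large_omega_mul.
have s_nonnil := omega_mul_large_size_gt0 c_pos large_s.
have ss : sorted leq (sort leq X) := sort_sorted leq_total X.
have all_colours : {in sort leq X, forall y, C y \in [set: 'I_c]}.
  by move=> y; rewrite inE.
have card_colours : #|[set: 'I_c]| <= c by rewrite cardsT card_ord.
have [i large_i] :=
  omega_mul_large_monochromatic ss s_nonnil all_colours card_colours large_s.
exists [seq y <- sort leq X | C y == i]; split.
- by rewrite filter_uniq // sort_uniq.
- by move=> y; rewrite mem_filter mem_sort => /andP[].
- by rewrite -[omega]/(omega_mul 1) large_omega_mul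
    (sorted_sort leq_trans (sorted_filter leq_trans _ ss)).
- by exists i => y; rewrite mem_filter => /andP[/eqP].
Qed.
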